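(* Let $P$ be a finite poset with a partition $P=P^*\sqcup C\sqcup O$ into marked, chain and order elements, where $\min(P)\subseteq P^*$. Let $\mathcal{I}=(I_0,\dots,I_{k-1})\in\mathfrak{I}(P^* )$ and $\lambda,\mu\in\mathcal{L}(P^*,\mathcal{I})$. Then \[\mathcal{O}_{C,O}(P,\lambda+\mu)=\mathcal{O}_{C,O}(P,\lambda)+\mathcal{O}_{C,O}(P,\mu).\] Furthermore, if $\lambda$ and $\mu$ are both integral, then \[\mathcal{O}^{\mathbb{Z}}_{C,O}(P,\lambda+\mu)=\mathcal{O}^{\mathbb{Z}}_{C,O}(P,\lambda)+\mathcal{O}^{\mathbb{Z}}_{C,O}(P,\mu).\]
   Context: $p\prec q$ denotes a covering relation in $P$. For an order-preserving $\lambda\colon P^*\to\mathbb{R}$, the marked chain-order polyhedron $\mathcal{O}_{C,O}(P,\lambda)\subseteq\mathbb{R}^P$ is the set of all $\mathbf{x}=(x_p)_{p\in P}$ with: (1) $x_a=\lambda(a)$ for $a\in P^*$; (2) $x_p\ge 0$ for $p\in C$; (3) $x_{p_1}+\cdots+x_{p_r}\le x_b-x_a$ for every saturated chain $a\prec p_1\prec\cdots\prec p_r\prec b$ in $P$ with $a,b\in P^*\sqcup O$, all $p_i\in C$, $r\ge0$. $\mathcal{O}^{\mathbb{Z}}_{C,O}(P,\lambda)=\mathcal{O}_{C,O}(P,\lambda)\cap\mathbb{Z}^P$; Minkowski sums are denoted by $+$. $\mathfrak{I}(P^* )$ is the set of chains $\varnothing\ne I_0\subsetneq I_1\subsetneq\cdots\subsetneq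 I_{k-1}\ne P^*$ of order ideals of the poset $P^*$ (with $k\ge 1$; the empty chain with $k=1$... i.e. any such chain, possibly of length zero); set $I_{-1}=\varnothing$, $I_k=P^*$. For $\mathcal{I}\in\mathfrak{I}(P^* )$, $\mathcal{L}(P^*,\mathcal{I})$ is the set of order-preserving maps $f\colon P^*\to\mathbb{R}$ that are constant on each $I_j\setminus I_{j-1}$ ($j=0,\dots,k$) and satisfy $f(I_0\setminus I_{-1})\le f(I_1\setminus I_0)\le\cdots\le f(I_k\setminus I_{k-1})$. A marking is integral if it takes values in $\mathbb{Z}$. *)

From HB Require Import structures.
From mathcomp Require Import all_boot all_order all_algebra.
From mathcomp Require Import reals.
Set Implicit Arguments. Unset Strict Implicit. Unset Printing Implicit Defensive.
Import Order.TTheory GRing.Theory Num.Theory.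
Local Open Scope ring_scope.

Section Defs.
Variables (d : Order.disp_t) (T : finPOrderType d) (R : realType).

Definition covers (p q : T) : bool :=
  (p < q)%O && [forall c : T, ~~ ((p < c)%O && (c < q)%O)].

Definition is_minimal (p : T) : bool := [forall q : T, ~~ (q < p)%O].

Definition marked_partition (Pstar C O : {set T}) : Prop :=
  [/\ [disjoint Pstar & C], [disjoint Pstar & O], [disjoint C & O],
      Pstar :|: C :|: O = [set: T] &
      (forall p : T, is_minimal p -> p \in Pstar)].

Definition MCO (Pstar C O : {set T}) (lam : T -> R) (x : T -> R) : Prop :=
  [/\ (forall a, a \in Pstar -> x a = lam a),
      (forall p, p \in C -> 0 <= x p) &
      (forall (a b : T) (ps : seq T),
          a \in Pstar :|: O -> b \in Pstar :|: O ->
          all (fun p => p \in C) ps ->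
          path covers a (rcons ps b) ->
          \sum_(p <- ps) x p <= x b - x a)].

Definition integral_pt (x : T -> R) : Prop := forall p, x p \is a Num.int.

Definition MCOZ (Pstar C O : {set T}) (lam : T -> R) (x : T -> R) : Prop :=
  MCO Pstar C O lam x /\ integral_pt x.

Definition msum (A B : (T -> R) -> Prop) (x : T -> R) : Prop :=
  exists y z, [/\ A y, B z & x = (fun p => y p + z p)].

Definition ideal_in (Pstar I : {set T}) : bool :=
  (I \subset Pstar) &&
  [forall p : T, forall q : T,
     ((p \in Pstar) && (q \in I) && (p <= q)%O) ==> (p \in I)].

Definition ideal_chain (Pstar : {set T}) (Is : seq {set T}) : Prop :=
  [/\ sorted (fun A B : {set T} => A \proper B) Is,
      all (ideal_in Pstar) Is,
      set0 \notin Is & Pstar \notin Is].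

(* Iext Is j = I_{j-1}, for j = 0..k+1 (I_{-1} = ∅, I_k = Pstar) *)
Definition Iext (Pstar : {set T}) (Is : seq {set T}) (j : nat) : {set T} :=
  nth Pstar (set0 :: Is) j.

(* block j = I_j \ I_{j-1}, j = 0..k *)
Definition block (Pstar : {set T}) (Is : seq {set T}) (j : nat) : {set T} :=
  Iext Pstar Is j.+1 :\: Iext Pstar Is j.

Definition order_pres_on (Pstar : {set T}) (f : T -> R) : Prop :=
  forall p q, p \in Pstar -> q \in Pstar -> (p <= q)%O -> f p <= f q.

Definition in_L (Pstar : {set T}) (Is : seq {set T}) (f : T -> R) : Prop :=
  [/\ order_pres_on Pstar f,
      (forall j p q, (j <= size Is)%N ->
          p \in block Pstar Is j -> q \in block Pstar Is j -> f p = f q) &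
      (forall j p q, (j < size Is)%N ->
          p \in block Pstar Is j -> q \in block Pstar Is j.+1 -> f p <= f q)].

End Defs.

(** Fix [x] in the polyhedron marked by [lam + mu].  The transfer map sends [x]
    to a point [h] of the marked order polyhedron: [h = x] off the chain
    elements, and on a chain element [p] the value [h p] is the largest sum of
    [x] along a saturated chain from a marked or order element up to [p].  For
    every nondecreasing [g], pulling [g \o h] back along the inverse transfer
    map gives a point of the chain-order polyhedron marked by
    [g \o (lam + mu)].  As [lam] and [mu] are constant on the blocks of the
    ideal chain and nondecreasing from block to block, they are comonotone, so
    some [psi] with [psi] and [id - psi] nondecreasing satisfies
    [psi (lam a + mu a) = mu a] on marked elements; the pullbacks along
    [id - psi] and [psi] then lie in the polyhedra for [lam] and [mu] and add
    up to [x].  For integral data [psi] maps integers to integers, which keeps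
    both summands integral. *)
From HB Require Import structures.
From mathcomp Require Import all_boot all_order all_algebra.
From mathcomp Require Import reals.
From mathcomp Require classical_sets boolp.
From mathcomp Require Import lra.
Import Order.TTheory GRing.Theory Num.Theory.
Local Open Scope ring_scope.
Set Implicit Arguments. Unset Strict Implicit. Unset Printing Implicit Defensive.

#[local] Arguments covers {d T} p q.

Lemma sup_int_mem (R : realType) (E : classical_sets.set R) :
  (exists v, E v) -> classical_sets.has_ubound E ->
  (forall v, E v -> v \is a Num.int) -> E (sup E).
Proof.
move=> E0 ubE Eint; have supE : classical_sets.has_sup E by [].
have [e Ee sup_lt_e] := sup_adherent ltr01 supE.
suff -> : sup E = e by [].
apply/le_anti; rewrite (sup_upper_bound supE) // andbT.
apply: ge_sup => // v Ev; rewrite leNgt; apply/negP => e_lt_v.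
have : 1 <= `|v - e| by rewrite norm_intr_ge1 ?rpredB ?Eint // subr_eq0 gt_eqF.
rewrite gtr0_norm ?subr_gt0 // => e1_le_v.
have := sup_upper_bound supE Ev; lra.
Qed.

Section Covers.
Variables (d : Order.disp_t) (T : finPOrderType d).

Lemma covers_lt (p q : T) : covers p q -> (p < q)%O.
Proof. by case/andP. Qed.

Lemma path_covers_uniq (a : T) (s : seq T) : path covers a s -> uniq (a :: s).
Proof. by move=> pth; apply: lt_sorted_uniq; apply: sub_path pth => ? ? /covers_lt. Qed.

Let below (p : T) := [set r | (r < p)%O].

Lemma card_below_lt (q p : T) : (q < p)%O -> (#|below q| < #|below p|)%N.
Proof.
move=> qp; apply: proper_card; apply/properP; split.
  by apply/subsetP => r; rewrite !inE => rq; apply: lt_trans rq qp.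
by exists q; rewrite !inE ?ltxx.
Qed.

Lemma exists_covered (p : T) : ~~ is_minimal p -> exists q, covers q p.
Proof.
rewrite negb_forall => /existsP [q0]; rewrite negbK => q0p.
have [q qp qmax] := @arg_maxnP _ q0 (fun q => (q < p)%O) (fun q => #|below q|) q0p.
exists q; apply/andP; split=> //; apply/forallP => c; apply/negP => /andP [qc cp].
by have /= := qmax c cp; rewrite leqNgt card_below_lt.
Qed.

Lemma covers_path_from (D : {set T}) (p : T) :
  (forall q, is_minimal q -> q \in D) -> p \notin D ->
  exists a qs, [/\ a \in D, all (fun q => q \in ~: D) qs & path covers a (rcons qs p)].
Proof.
move=> minD; suff: forall n p, (#|below p| < n)%N -> p \notin D ->
    exists a qs, [/\ a \in D, all (fun q => q \in ~: D) qs & path covers a (rcons qs p)].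
  by apply.
elim=> // n IH {}p p_lt pD.
have [q qp] : exists q, covers q p by apply: exists_covered; apply: contra pD; apply: minD.
have [qD | qD] := boolP (q \in D); first by exists q, [::]; rewrite /= qp.
have [|a [qs [aD qsD pth]]] := IH q _ qD.
  by apply: leq_trans (card_below_lt (covers_lt qp)) _; rewrite -ltnS.
exists a, (rcons qs q); split=> //; first by rewrite all_rcons in_setC qD.
by rewrite rcons_path pth last_rcons.
Qed.

End Covers.

Section Transfer.
Variables (d : Order.disp_t) (T : finPOrderType d) (R : realType) (D C : {set T}).

Definition chain_ineq (x : T -> R) : Prop :=
  forall (a b : T) (ps : seq T), a \in D -> b \in D ->
    all (fun p => p \in C) ps -> path covers a (rcons ps b) ->
    \sum_(p <- ps) x p <= x b - x a.

Variable x : T -> R.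

Definition chain_sums (p : T) : classical_sets.set R :=
  fun v => exists a qs, [/\ a \in D, all (fun q => q \in C) qs,
    path covers a (rcons qs p) & v = x a + \sum_(q <- qs) x q].

Definition chain_sup (p : T) : R := sup (chain_sums p).

Definition transfer (p : T) : R := if p \in C then chain_sup p + x p else x p.

(* The inverse transfer map applied to [g \o transfer]: [chain_sup p] is the
   maximum of [transfer] over the elements covered by [p]. *)
Definition pullback (g : R -> R) (p : T) : R :=
  if p \in C then g (transfer p) - g (chain_sup p) else g (x p).

Lemma chain_sums_ubound p : classical_sets.has_ubound (chain_sums p).
Proof.
exists (\sum_t `|x t|) => _ [a [qs [_ _ pth ->]]].
have uniq_aqs : uniq (a :: qs).
  by apply: subseq_uniq (path_covers_uniq pth); rewrite /= eqxx subseq_rcons.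
have -> : x a + \sum_(q <- qs) x q = \sum_(q <- a :: qs) x q by rewrite big_cons.
apply: le_trans (ler_sum _ (fun q _ => ler_norm (x q))) _.
rewrite big_uniq // [leRHS](bigID (mem (a :: qs))) /= lerDl.
by apply: sumr_ge0 => t _; apply: normr_ge0.
Qed.

Lemma chain_sums_rcons s q v :
  s \in C -> covers s q -> chain_sums s v -> chain_sums q (v + x s).
Proof.
move=> sC sq [a [qs [aD qsC pth ->]]]; exists a, (rcons qs s); split=> //.
- by rewrite all_rcons sC.
- by rewrite rcons_path pth last_rcons.
- by rewrite -cats1 big_cat big_seq1 addrA.
Qed.

Lemma pullback_add (g : R -> R) p :
  pullback (fun t => t - g t) p + pullback g p = x p.
Proof. by rewrite /pullback /transfer; case: (p \in C); lra. Qed.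

Hypothesis C_compl : C = ~: D.
Hypothesis minimal_in_D : forall p, is_minimal p -> p \in D.

Lemma mem_C p : (p \in C) = (p \notin D).
Proof. by rewrite C_compl in_setC. Qed.

Lemma chain_sums_nonempty p : p \in C -> exists v, chain_sums p v.
Proof.
rewrite mem_C => pD; have [a [qs [aD qsC pth]]] := covers_path_from minimal_in_D pD.
by exists (x a + \sum_(q <- qs) x q), a, qs; rewrite C_compl.
Qed.

Lemma transfer_le_chain_sup s q : q \in C -> covers s q -> transfer s <= chain_sup q.
Proof.
move=> qC sq; rewrite /transfer; case: ifPn => sC.
  rewrite -lerBrDr; apply: ge_sup; first exact: chain_sums_nonempty.
  move=> v Vv; rewrite lerBrDr.
  exact: ub_le_sup (chain_sums_ubound q) _ (chain_sums_rcons sC sq Vv).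
apply: ub_le_sup (chain_sums_ubound q) _ _; exists s, [::].
by rewrite -[s \in D]negbK -mem_C sC /= sq big_nil addr0.
Qed.

Lemma transfer_le_marked s b :
  chain_ineq x -> b \in D -> covers s b -> transfer s <= x b.
Proof.
move=> x_chain bD sb; rewrite /transfer; case: ifPn => sC.
  rewrite -lerBrDr; apply: ge_sup; first exact: chain_sums_nonempty.
  move=> _ [a [qs [aD qsC pth ->]]].
  have := x_chain a b (rcons qs s) aD bD.
  rewrite all_rcons sC qsC rcons_path pth last_rcons sb big_rcons /=.
  by move=> /(_ isT isT); lra.
have sD : s \in D by rewrite -[s \in D]negbK -mem_C.
by have := x_chain s b [::] sD bD isT; rewrite /= sb big_nil subr_ge0 => ->.
Qed.

Lemma chain_sup_int p : p \in C -> integral_pt x -> chain_sup p \is a Num.int.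
Proof.
move=> pC xZ; have : chain_sums p (chain_sup p).
  apply: sup_int_mem (chain_sums_nonempty pC) (chain_sums_ubound p) _.
  by move=> _ [a [qs [_ _ _ ->]]]; rewrite rpredD ?rpred_sum.
by case=> a [qs [_ _ _ ->]]; rewrite rpredD ?rpred_sum.
Qed.

Lemma pullback_int g : integral_pt x ->
  (forall t, t \is a Num.int -> g t \is a Num.int) -> integral_pt (pullback g).
Proof.
move=> xZ gZ p; rewrite /pullback /transfer; case: ifPn => pC; last exact: gZ.
by rewrite pC rpredB ?gZ ?rpredD ?xZ ?chain_sup_int.
Qed.

Lemma pullback_D g p : p \in D -> pullback g p = g (x p).
Proof. by rewrite /pullback mem_C => ->. Qed.

Variable g : R -> R.
Hypothesis g_homo : {homo g : s t / s <= t}.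

Lemma pullback_ge0 : (forall p, p \in C -> 0 <= x p) ->
  forall p, p \in C -> 0 <= pullback g p.
Proof.
move=> x_ge0 p pC; rewrite /pullback /transfer pC subr_ge0.
by apply: g_homo; rewrite lerDl x_ge0.
Qed.

Lemma pullback_telescope s qs : all (fun q => q \in C) qs -> path covers s qs ->
  \sum_(q <- qs) pullback g q <= g (transfer (last s qs)) - g (transfer s).
Proof.
elim: qs s => [|q qs IH] s /=; first by rewrite big_nil subrr.
case/andP => qC qsC /andP [sq pth]; rewrite big_cons.
have := IH q qsC pth; have := g_homo (transfer_le_chain_sup qC sq).
by rewrite /pullback qC; lra.
Qed.

Lemma pullback_chain_ineq : chain_ineq x -> chain_ineq (pullback g).
Proof.
move=> x_chain a b ps aD bD psC; rewrite rcons_path => /andP [pth lb].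
have := pullback_telescope psC pth; have := g_homo (transfer_le_marked x_chain bD lb).
have aC : a \notin C by rewrite mem_C aD.
by rewrite !pullback_D // /transfer (negbTE aC); lra.
Qed.

End Transfer.

Section MarkedPolyhedron.
Variables (d : Order.disp_t) (T : finPOrderType d) (R : realType).
Variables (Pstar C O : {set T}).
Hypothesis hmp : marked_partition Pstar C O.

Lemma marked_partition_compl : C = ~: (Pstar :|: O).
Proof.
case: hmp => dPC _ dCO cover _; apply/setP => p; rewrite !inE.
have [pC | pC] := boolP (p \in C); first by rewrite (disjointFl dPC pC) (disjointFr dCO pC).
have : p \in Pstar :|: C :|: O by rewrite cover inE.
by rewrite !inE (negbTE pC) orbF => ->.
Qed.

Lemma minimal_marked p : is_minimal p -> p \in Pstar :|: O.
Proof. by case: hmp => _ _ _ _ minP /minP; rewrite inE => ->. Qed.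

Lemma MCO_pullback (lam target : T -> R) (g : R -> R) (x : T -> R) :
  {homo g : s t / s <= t} -> (forall a, a \in Pstar -> g (lam a) = target a) ->
  MCO Pstar C O lam x -> MCO Pstar C O target (pullback (Pstar :|: O) C x g).
Proof.
move=> g_homo g_lam [x_lam x_ge0 x_chain]; have hC := marked_partition_compl.
split.
- by move=> a aP; rewrite pullback_D // ?inE ?aP // x_lam ?g_lam.
- exact: pullback_ge0.
- exact: (pullback_chain_ineq hC minimal_marked).
Qed.

Lemma MCO_add (lam mu y z : T -> R) :
  MCO Pstar C O lam y -> MCO Pstar C O mu z ->
  MCO Pstar C O (fun a => lam a + mu a) (fun p => y p + z p).
Proof.
move=> [y_lam y_ge0 y_chain] [z_mu z_ge0 z_chain]; split.
- by move=> a aP; rewrite y_lam ?z_mu.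
- by move=> p pC; rewrite addr_ge0 ?y_ge0 ?z_ge0.
move=> a b ps aD bD psC pth; rewrite big_split /=.
by have := y_chain a b ps aD bD psC pth; have := z_chain a b ps aD bD psC pth; lra.
Qed.

End MarkedPolyhedron.

Definition comonotone_on (I : finType) (R : realType) (A : {set I}) (f g : I -> R) :=
  {in A &, forall a b, (f a <= f b /\ g a <= g b) \/ (f b <= f a /\ g b <= g a)}.

(* [psi] is the upper envelope of the functions [t |-> min (mu a) (t - lam a)],
   each of which passes through [(lam a + mu a, mu a)]. *)
Lemma comonotone_interpolation (I : finType) (R : realType) (A : {set I})
    (lam mu : I -> R) :
  comonotone_on A lam mu ->
  exists psi : R -> R,
    [/\ {homo psi : s t / s <= t}, {homo (fun t => t - psi t) : s t / s <= t},
        {in A, forall a, psi (lam a + mu a) = mu a} &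
        (forall a, a \in A -> lam a \is a Num.int) ->
        (forall a, a \in A -> mu a \is a Num.int) ->
        forall t, t \is a Num.int -> psi t \is a Num.int].
Proof.
move=> como; have [-> | [a0 a0A]] := set_0Vmem A.
  by exists (fun=> 0); split=> [s t _ | s t | a | _ _ t _]; rewrite ?subr0 ?inE.
pose f a t := Num.min (mu a) (t - lam a).
pose psi t := \big[Num.max/f a0 t]_(a in A) f a t.
have le_psi a t : a \in A -> f a t <= psi t by move=> aA; apply: le_bigmax_cond.
have psi_le t m : (forall a, a \in A -> f a t <= m) -> psi t <= m.
  by move=> fm; apply: bigmax_le => //; apply: fm.
exists psi; split.
- move=> s t st; apply: psi_le => a aA; apply: le_trans (le_psi a t aA).
  rewrite /f !minEle.
  by case: (leP (mu a) (s - lam a)); case: (leP (mu a) (t - lam a)); lra.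
- move=> s t st; suff : psi t <= psi s + (t - s) by lra.
  apply: psi_le => a aA; apply: le_trans _ (lerD (le_psi a s aA) (lexx (t - s))).
  rewrite /f !minEle.
  by case: (leP (mu a) (s - lam a)); case: (leP (mu a) (t - lam a)); lra.
- move=> b bA; apply/le_anti/andP; split.
    apply: psi_le => a aA; rewrite /f ge_min.
    by case: (como a b aA bA) => [[_ ->] // | [lam_ba _]]; apply/orP; right; lra.
  by have := le_psi b (lam b + mu b) bA; rewrite /f [lam b + _]addrC addrK minxx.
- move=> lamZ muZ t tZ.
  have fZ a : a \in A -> f a t \is a Num.int.
    by move=> aA; rewrite /f minEle; case: ifP => _; rewrite ?rpredB ?lamZ ?muZ.
  apply: (big_ind (fun v => v \is a Num.int)) => [|u v uZ vZ|]; first exact: fZ.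
    by rewrite maxEle; case: ifP.
  exact: fZ.
Qed.

Section IdealChain.
Variables (d : Order.disp_t) (T : finPOrderType d) (R : realType).
Variables (Pstar : {set T}) (Is : seq {set T}).

Lemma mem_block a : a \in Pstar -> exists2 j, (j <= size Is)%N & a \in block Pstar Is j.
Proof.
move=> aP; suff: forall m, a \in Iext Pstar Is m ->
    exists2 j, (j < m)%N & a \in block Pstar Is j.
  by move=> /(_ (size Is).+1); rewrite /Iext nth_default // => /(_ aP) [j]; exists j.
elim=> [|m IH]; first by rewrite /Iext /= inE.
move=> am; have [am' | am'] := boolP (a \in Iext Pstar Is m).
  by have [j jm ab] := IH am'; exists j => //; apply: ltnW.
by exists m => //; rewrite /block inE am' am.
Qed.

Hypothesis hIs : ideal_chain Pstar Is.

Lemma block_nonempty j : (j < size Is)%N -> exists r, r \in block Pstar Is j.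
Proof.
case: hIs => srt _ n0 _ js.
suff : Iext Pstar Is j \proper Iext Pstar Is j.+1.
  by case/properP => _ [r r1 r2]; exists r; rewrite /block inE r1 r2.
rewrite /Iext /=; case: j js => [|i] js /=.
  by rewrite proper0; apply: contraNneq n0 => <-; apply: mem_nth.
exact: (sortedP Pstar srt).
Qed.

Lemma in_L_block_homo (f : T -> R) : in_L Pstar Is f ->
  forall i j p q, (i <= j)%N -> (j <= size Is)%N ->
  p \in block Pstar Is i -> q \in block Pstar Is j -> f p <= f q.
Proof.
case=> _ f_block f_step i j; elim: j => [|j IH] p q ij js pi qj.
  by move: ij; rewrite leqn0 => /eqP ij; subst i; rewrite (f_block 0%N p q).
move: ij; rewrite leq_eqVlt => /orP [/eqP ij | ij]; first by subst i; rewrite (f_block j.+1 p q).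
have [r rj] := block_nonempty js.
by apply: le_trans (IH p r ij (ltnW js) pi rj) (f_step j r q js rj qj).
Qed.

Lemma in_L_comonotone (lam mu : T -> R) :
  in_L Pstar Is lam -> in_L Pstar Is mu -> comonotone_on Pstar lam mu.
Proof.
move=> hlam hmu a b aP bP.
have [i i_le ai] := mem_block aP; have [j j_le bj] := mem_block bP.
have [ij | ji] := leqP i j.
  by left; split; apply: in_L_block_homo ij j_le ai bj.
by right; split; apply: in_L_block_homo (ltnW ji) i_le bj ai.
Qed.

End IdealChain.

Theorem theorem2p10 (d : Order.disp_t) (T : finPOrderType d) (R : realType)
    (Pstar C O : {set T}) (Is : seq {set T}) (lam mu : T -> R) :
  marked_partition Pstar C O ->
  ideal_chain Pstar Is ->
  in_L Pstar Is lam -> in_L Pstar Is mu ->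
  (forall x : T -> R,
     MCO Pstar C O (fun a => lam a + mu a) x <->
     msum (MCO Pstar C O lam) (MCO Pstar C O mu) x) /\
  ((forall a, a \in Pstar -> lam a \is a Num.int) ->
   (forall a, a \in Pstar -> mu a \is a Num.int) ->
   forall x : T -> R,
     MCOZ Pstar C O (fun a => lam a + mu a) x <->
     msum (MCOZ Pstar C O lam) (MCOZ Pstar C O mu) x).
Proof.
move=> hmp hIs hlam hmu.
have [psi [psi_homo psi_lip psi_lam_mu psiZ]] :=
  comonotone_interpolation (in_L_comonotone hIs hlam hmu).
pose y x := pullback (Pstar :|: O) C x (fun t => t - psi t).
pose z x := pullback (Pstar :|: O) C x psi.
have x_yz x : x = (fun p => y x p + z x p) by apply: boolp.funext => p; rewrite pullback_add.
have yz_MCO x : MCO Pstar C O (fun a => lam a + mu a) x ->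
    MCO Pstar C O lam (y x) /\ MCO Pstar C O mu (z x).
  move=> hx; split; last by apply: (MCO_pullback hmp psi_homo) hx; exact: psi_lam_mu.
  by apply: (MCO_pullback hmp psi_lip) hx => a aP; rewrite psi_lam_mu // addrK.
split=> [x | lamZ muZ x]; split.
- by case/yz_MCO => hy hz; exists (y x), (z x); split=> //; apply: x_yz.
- by case=> [v [w [hv hw ->]]]; apply: MCO_add.
- case=> /yz_MCO [hy hz] xZ; have {}psiZ := psiZ lamZ muZ.
  have yz_int := pullback_int (marked_partition_compl hmp) (minimal_marked hmp) xZ.
  exists (y x), (z x); split=> //; split=> //; apply: yz_int => // t tZ.
  by rewrite rpredB ?psiZ.
- case=> [v [w [[hv vZ] [hw wZ] ->]]]; split; first exact: MCO_add.
  by move=> p; rewrite rpredD.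
Qed.
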